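(* Let $Q$ and $H$ be countable groups and let $(S_i)_{i\in\mathbb{N}}$ with $S_i\subseteq Q$ and $(T_i)_{i\in\mathbb{N}}$ with $T_i\subseteq H$ be ascending sequences of finite sets such that $Q$ is generated by $\bigcup_i S_i$ and $H$ is generated by $\bigcup_i T_i$. Assume there is a map $r\colon H\to Q$ such that for every $i$: (1) if $d_{T_i}(x,y)<\infty$ then $d_{S_i}(r(x),r(y))<\infty$; and (2) every element of $Q$ has finite $d_{S_i}$-distance to $r(H)$. If $H$ is finitely generated, then so is $Q$.
   Context: For a subset $S$ of a group, $d_S$ denotes the word metric with respect to $S$, i.e. the path metric of the Cayley graph with respect to $S$, taking the value $\infty$ for two elements not connected by a path in that graph. *)

From Stdlib Require Import List.
Import ListNotations.
Set Implicit Arguments.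

Record Group := {
  carrier :> Type;
  gmul : carrier -> carrier -> carrier;
  gone : carrier;
  ginv : carrier -> carrier;
  gmulA : forall x y z, gmul x (gmul y z) = gmul (gmul x y) z;
  gmul1g : forall x, gmul gone x = x;
  gmulVg : forall x, gmul (ginv x) x = gone
}.

Definition countable_group (G : Group) : Prop :=
  exists f : G -> nat, forall x y, f x = f y -> x = y.

Definition finite_subset {G : Group} (S : G -> Prop) : Prop :=
  exists l : list G, forall x, S x <-> In x l.

(* A word: a list of letters (b, s), standing for s (b = false) or s^-1 (b = true). *)
Definition letter_in {G : Group} (S : G -> Prop) (p : bool * G) : Prop := S (snd p).

Fixpoint word_eval {G : Group} (w : list (bool * G)) : G :=
  match w with
  | [] => gone G
  | (b, s) :: w' => gmul G (if b then ginv G s else s) (word_eval w')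
  end.

(* d_S(x,y) < oo : x and y lie in the same connected component of the
   Cayley graph of G w.r.t. S (edges x -- x s, s in S), i.e. there is a
   path x, x s1^{±1}, x s1^{±1} s2^{±1}, ..., y. *)
Definition word_dist_finite {G : Group} (S : G -> Prop) (x y : G) : Prop :=
  exists w : list (bool * G),
    (forall p, In p w -> letter_in S p) /\ y = gmul G x (word_eval w).

Definition generated_by {G : Group} (S : G -> Prop) : Prop :=
  forall g : G, exists w : list (bool * G),
    (forall p, In p w -> letter_in S p) /\ g = word_eval w.

Definition finitely_generated (G : Group) : Prop :=
  exists S : G -> Prop, finite_subset S /\ generated_by S.

(** Since [H] is finitely generated and the [T i] exhaust a generating set,
    each of the finitely many generators is joined to [1] by a [T i]-path for
    one common [i]; hence [H] is generated by [T i], i.e. its [T i]-Cayley graph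
    is connected.  Property (1) carries this over to the [S i]-Cayley graph on
    [r(H)], and property (2) joins every point of [Q] to [r(H)], so the
    [S i]-Cayley graph of [Q] is connected and the finite set [S i] generates [Q]. *)

From Stdlib Require Import List Lia.
Import ListNotations.

Lemma exists_uniform_index {A : Type} (P : nat -> A -> Prop)
  (P_mono : forall i j a, i <= j -> P i a -> P j a) (l : list A) :
  (forall a, In a l -> exists i, P i a) -> exists i, forall a, In a l -> P i a.
Proof.
  induction l as [|a l IH]; intros Hl.
  - exists 0; intros a [].
  - destruct (Hl a (or_introl eq_refl)) as [i Hi].
    destruct IH as [j Hj]; [intros b Hb; apply Hl; right; exact Hb|].
    exists (Nat.max i j); intros b [<-|Hb].
    + apply P_mono with i; [lia|exact Hi].
    + apply P_mono with j; [lia|apply Hj, Hb].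
Qed.

Section Connectivity.
Variable G : Group.
Implicit Types (x y z g : G) (S F : G -> Prop) (w : list (bool * G)).

Lemma gmulgV x : gmul G x (ginv G x) = gone G.
Proof.
  rewrite <- (gmul1g G (gmul G x (ginv G x))).
  rewrite <- (gmulVg G (ginv G x)) at 1.
  rewrite <- gmulA, (gmulA G (ginv G x) x), gmulVg, gmul1g.
  apply gmulVg.
Qed.

Lemma gmulg1 x : gmul G x (gone G) = x.
Proof. rewrite <- (gmulVg G x), gmulA, gmulgV, gmul1g; reflexivity. Qed.

Lemma word_eval_app w1 w2 :
  word_eval (w1 ++ w2) = gmul G (word_eval w1) (word_eval w2).
Proof.
  induction w1 as [|[b s] w IH]; simpl.
  - rewrite gmul1g; reflexivity.
  - rewrite IH, gmulA; reflexivity.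
Qed.

Lemma wd_refl S x : word_dist_finite S x x.
Proof. exists []; split; [intros p []|simpl; rewrite gmulg1; reflexivity]. Qed.

Lemma wd_trans S x y z :
  word_dist_finite S x y -> word_dist_finite S y z -> word_dist_finite S x z.
Proof.
  intros [w1 [Hw1 E1]] [w2 [Hw2 E2]]; exists (w1 ++ w2); split.
  - intros p Hp; apply in_app_or in Hp as [Hp|Hp]; auto.
  - rewrite word_eval_app, gmulA, <- E1; exact E2.
Qed.

Lemma wd_step S x (b : bool) s : S s ->
  word_dist_finite S x (gmul G x (if b then ginv G s else s)).
Proof.
  intros Hs; exists [(b, s)]; split.
  - intros p [<-|[]]; exact Hs.
  - simpl; rewrite gmulg1; reflexivity.
Qed.

Lemma wd_sym S x y : word_dist_finite S x y -> word_dist_finite S y x.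
Proof.
  intros [w [Hw E]]; subst y; revert x.
  induction w as [|[b s] w IH]; intros x; simpl.
  - rewrite gmulg1; apply wd_refl.
  - assert (Hs : S s) by (apply (Hw (b, s)); left; reflexivity).
    set (x' := gmul G x (if b then ginv G s else s)).
    rewrite gmulA; fold x'.
    apply wd_trans with x'; [apply IH; intros p Hp; apply Hw; right; exact Hp|].
    replace x with (gmul G x' (if negb b then ginv G s else s)); [apply wd_step, Hs|].
    unfold x'; destruct b; simpl; rewrite <- gmulA;
      [rewrite gmulVg | rewrite gmulgV]; apply gmulg1.
Qed.

Lemma wd_mull S g x y :
  word_dist_finite S x y -> word_dist_finite S (gmul G g x) (gmul G g y).
Proof. intros [w [Hw E]]; exists w; split; [exact Hw|rewrite E, gmulA; reflexivity]. Qed.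

Lemma wd_mono S F x y : (forall z, S z -> F z) ->
  word_dist_finite S x y -> word_dist_finite F x y.
Proof. intros SF [w [Hw E]]; exists w; split; [intros p Hp; apply SF, Hw, Hp|exact E]. Qed.

Lemma generated_by_iff_connected S :
  generated_by S <-> forall g, word_dist_finite S (gone G) g.
Proof.
  split; intros HS g; destruct (HS g) as [w [Hw E]]; exists w; split; auto.
  - rewrite E, gmul1g; reflexivity.
  - rewrite E, gmul1g; reflexivity.
Qed.

Lemma wd_one_mul S x y : word_dist_finite S (gone G) x ->
  word_dist_finite S (gone G) y -> word_dist_finite S (gone G) (gmul G x y).
Proof.
  intros Hx Hy; apply wd_trans with x; [exact Hx|].
  rewrite <- (gmulg1 x) at 1; apply wd_mull, Hy.
Qed.

Lemma wd_one_inv S x : word_dist_finite S (gone G) x ->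
  word_dist_finite S (gone G) (ginv G x).
Proof.
  intros Hx; apply wd_sym.
  pose proof (wd_mull S (ginv G x) _ _ Hx) as K; rewrite gmulg1, gmulVg in K; exact K.
Qed.

Lemma wd_one_word_eval S w :
  (forall p, In p w -> word_dist_finite S (gone G) (snd p)) ->
  word_dist_finite S (gone G) (word_eval w).
Proof.
  induction w as [|[b s] w IH]; intros Hw; simpl; [apply wd_refl|].
  apply wd_one_mul; [|apply IH; intros p Hp; apply Hw; right; exact Hp].
  pose proof (Hw (b, s) (or_introl eq_refl)) as Hs.
  destruct b; [apply wd_one_inv|]; exact Hs.
Qed.

Lemma generated_by_of_connected_generators S F : generated_by F ->
  (forall f, F f -> word_dist_finite S (gone G) f) -> generated_by S.
Proof.
  intros HF FS; apply generated_by_iff_connected; intros g.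
  destruct (HF g) as [w [Hw ->]].
  apply wd_one_word_eval; intros p Hp; apply FS, Hw, Hp.
Qed.

Section AscendingUnion.
Variable T : nat -> G -> Prop.
Hypothesis T_asc : forall i x, T i x -> T (i + 1) x.

Lemma ascending_le i j x : i <= j -> T i x -> T j x.
Proof.
  induction 1 as [|j _ IH]; [tauto|].
  intros Hx; rewrite <- PeanoNat.Nat.add_1_r; apply T_asc, IH, Hx.
Qed.

Lemma wd_one_of_generated_by_union :
  generated_by (fun g => exists i, T i g) ->
  forall g, exists i, word_dist_finite (T i) (gone G) g.
Proof.
  intros HT g; destruct (HT g) as [w [Hw E]].
  destruct (exists_uniform_index (fun i p => letter_in (T i) p)
              (fun i j p Hij => ascending_le i j (snd p) Hij) w Hw) as [i Hi].
  exists i; exists w; split; [exact Hi|rewrite E, gmul1g; reflexivity].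
Qed.

Lemma fg_generated_by_ascending_term :
  finitely_generated G -> generated_by (fun g => exists i, T i g) ->
  exists i, generated_by (T i).
Proof.
  intros [F [[l Hl] HF]] HT.
  destruct (exists_uniform_index (fun i f => word_dist_finite (T i) (gone G) f)
              (fun i j f Hij => wd_mono _ _ _ _ (fun z => ascending_le i j z Hij)) l
              (fun f _ => wd_one_of_generated_by_union HT f)) as [i Hi].
  exists i; apply generated_by_of_connected_generators with F; [exact HF|].
  intros f Hf; apply Hi, Hl, Hf.
Qed.

End AscendingUnion.
End Connectivity.

Lemma generated_by_of_coarse_surjection (Q H : Group) (S : Q -> Prop)
  (T : H -> Prop) (r : H -> Q) (HT : generated_by T)
  (r_conn : forall x y, word_dist_finite T x y -> word_dist_finite S (r x) (r y))
  (r_dense : forall q, exists h, word_dist_finite S q (r h)) :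
  generated_by S.
Proof.
  rewrite generated_by_iff_connected in HT |- *; intros q.
  destruct (r_dense (gone Q)) as [h0 Hh0]; destruct (r_dense q) as [h Hh].
  apply wd_trans with (r h0); [exact Hh0|].
  apply wd_trans with (r (gone H)); [apply r_conn, wd_sym, HT|].
  apply wd_trans with (r h); [apply r_conn, HT|apply wd_sym, Hh].
Qed.

Theorem lemma5p6 (Q H : Group)
  (S : nat -> Q -> Prop) (T : nat -> H -> Prop) (r : H -> Q)
  (hQc : countable_group Q) (hHc : countable_group H)
  (hSfin : forall i, finite_subset (S i)) (hTfin : forall i, finite_subset (T i))
  (hSasc : forall i x, S i x -> S (i + 1) x)
  (hTasc : forall i x, T i x -> T (i + 1) x)
  (hSgen : generated_by (fun q : Q => exists i, S i q))
  (hTgen : generated_by (fun h : H => exists i, T i h))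
  (hr1 : forall i (x y : H), word_dist_finite (T i) x y ->
           word_dist_finite (S i) (r x) (r y))
  (hr2 : forall i (q : Q), exists h : H, word_dist_finite (S i) q (r h))
  (hHfg : finitely_generated H) :
  finitely_generated Q.
Proof.
  destruct (fg_generated_by_ascending_term H T hTasc hHfg hTgen) as [i HTi].
  exists (S i); split; [apply hSfin|].
  apply generated_by_of_coarse_surjection with H (T i) r; [exact HTi|apply hr1|apply hr2].
Qed.
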